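(* Let $(R,\mathfrak{m},k)$ be a commutative Noetherian local ring and let $x,y\in\mathfrak{m}$. For any integer $n>\operatorname{s}(x,y)$ and any exact sequence of $R$-modules $0 \to (R/(x))^n \to M \to R/(y) \to 0$, the module $M$ has a direct summand isomorphic to $R/(x)$. In particular, $M$ is decomposable.
   Context: For $x,y\in\mathfrak{m}$, $\operatorname{s}(x,y)\in\{0,1,2,\dots\}\cup\{\infty\}$ is the supremum of the nonnegative integers $n$ such that there exists an ideal $I$ of $R$ whose image $I(R/(x,y))$ in $R/(x,y)$ has minimal number of generators (as an $R/(x,y)$-module) equal to $n$. *)

From HB Require Import structures.
From mathcomp Require Import all_boot all_order all_algebra.
From mathcomp Require Import boolp.
From mathcomp Require Import ring_quotient generic_quotient.

Set Implicit Arguments.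
Unset Strict Implicit.
Unset Printing Implicit Defensive.

Import GRing.Theory.
Local Open Scope ring_scope.
Local Open Scope quotient_scope.

Definition is_ideal (R : comNzRingType) (I : R -> Prop) : Prop :=
  [/\ I 0, (forall a b, I a -> I b -> I (a + b)) & (forall r a, I a -> I (r * a))].

Definition fin_gen_ideal (R : comNzRingType) (I : R -> Prop) : Prop :=
  exists m (a : 'I_m -> R),
    forall r, I r <-> exists c : 'I_m -> R, r = \sum_(i < m) c i * a i.

Definition noetherian_ring (R : comNzRingType) : Prop :=
  forall I : R -> Prop, is_ideal I -> fin_gen_ideal I.

(* Local (R is a nonzero ring): the non-units form an ideal, namely the
   unique maximal ideal m = { a | a is not a unit }. *)
Definition local_ring (R : comUnitRingType) : Prop :=
  forall a b : R, a \notin GRing.unit -> b \notin GRing.unit ->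
    a + b \notin GRing.unit.

Definition in_max_ideal (R : comUnitRingType) (a : R) : Prop :=
  a \notin GRing.unit.

(* The image I(R/(x,y)) of the ideal I in R/(x,y) can be generated, as an
   R/(x,y)-module, by m elements.  Elements of I(R/(x,y)) are the classes
   of elements of I and coefficients in R/(x,y) lift to R, so this says:
   there are a_0..a_{m-1} in I with I contained in (a_0..a_{m-1}) + (x,y). *)
Definition image_gen_by (R : comNzRingType) (x y : R) (I : R -> Prop) (m : nat)
  : Prop :=
  exists a : 'I_m -> R, (forall i, I (a i)) /\
    forall r, I r -> exists (c : 'I_m -> R) (s t : R),
      r = \sum_(i < m) c i * a i + s * x + t * y.

Definition min_gens_image (R : comNzRingType) (x y : R) (I : R -> Prop)
  (m : nat) : Prop :=
  image_gen_by x y I m /\ (forall m', (m' < m)%N -> ~ image_gen_by x y I m').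

(* s(x,y) < n, where s(x,y) is the supremum (in N ∪ {∞}) over all ideals I
   of the minimal number of generators of I(R/(x,y)). *)
Definition s_lt (R : comNzRingType) (x y : R) (n : nat) : Prop :=
  forall I : R -> Prop, is_ideal I ->
    forall m, min_gens_image x y I m -> (m < n)%N.

Section PrincipalQuotient.
Variables (R : comNzRingType) (x : R).

Definition pideal : {pred R} := fun r => `[< exists c : R, r = c * x >].

Lemma pidealP r : reflect (exists c, r = c * x) (r \in pideal).
Proof. exact: asboolP. Qed.

Fact pideal_zmod : zmod_closed pideal.
Proof.
split; first by apply/pidealP; exists 0; rewrite mul0r.
move=> a b /pidealP[c ->] /pidealP[d ->]; apply/pidealP.
by exists (c - d); rewrite mulrBl.
Qed.

HB.instance Definition _ := GRing.isZmodClosed.Build R pideal pideal_zmod.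

Definition quot_x := @Quotient.quot R pideal.

HB.instance Definition _ := GRing.Zmodule.on quot_x.
HB.instance Definition _ := Choice.on quot_x.

Definition qscale (r : R) (q : quot_x) : quot_x :=
  \pi_(quot_x) (r * repr q).

Lemma qscale_pi r a : qscale r (\pi_(quot_x) a) = \pi_(quot_x) (r * a).
Proof.
rewrite /qscale; apply/eqP; rewrite -(@Quotient.idealrBE R pideal).
have : repr (\pi_(quot_x) a) == a %[mod quot_x] by rewrite reprK.
rewrite -(@Quotient.idealrBE R pideal) => /pidealP[c Hc]; apply/pidealP.
by exists (r * c); rewrite -mulrBr Hc mulrA.
Qed.

Lemma pi_addx u v :
  \pi_(quot_x) (u + v) = \pi_(quot_x) u + \pi_(quot_x) v :> quot_x.
Proof. exact: Quotient.pi_add. Qed.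

Fact qscaleA a b v : qscale a (qscale b v) = qscale (a * b) v.
Proof. by elim/quotW: v => v; rewrite (qscale_pi b) (qscale_pi a) (qscale_pi (a * b)) mulrA. Qed.

Fact qscale1 : left_id 1 qscale.
Proof. by elim/quotW=> v; rewrite qscale_pi mul1r. Qed.

Fact qscaleDr : right_distributive qscale +%R.
Proof.
move=> a u v; elim/quotW: u => u; elim/quotW: v => v.
by rewrite -pi_addx (qscale_pi a u) (qscale_pi a v) (qscale_pi a (u + v)) mulrDr pi_addx.
Qed.

Fact qscaleDl v : {morph qscale^~ v : a b / a + b}.
Proof.
by move=> a b; elim/quotW: v => v; rewrite (qscale_pi a) (qscale_pi b) (qscale_pi (a + b)) mulrDl pi_addx.
Qed.

HB.instance Definition _ :=
  GRing.Zmodule_isLmodule.Build R quot_x qscaleA qscale1 qscaleDr qscaleDl.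

End PrincipalQuotient.

Definition quot_x_pow (R : comNzRingType) (x : R) (n : nat) : lmodType R :=
  {ffun 'I_n -> quot_x x}.

Definition is_submod (R : comNzRingType) (M : lmodType R) (N : M -> Prop) : Prop :=
  [/\ N 0, (forall u v, N u -> N v -> N (u + v)) & (forall r u, N u -> N (r *: u))].

Definition direct_sum_decomp (R : comNzRingType) (M : lmodType R)
  (N1 N2 : M -> Prop) : Prop :=
  [/\ is_submod N1, is_submod N2,
      (forall u, N1 u -> N2 u -> u = 0) &
      (forall m, exists u v, [/\ N1 u, N2 v & m = u + v])].

Definition submod_iso (R : comNzRingType) (M Q : lmodType R) (N : M -> Prop) : Prop :=
  exists f : {linear Q -> M}, injective f /\ (forall m, N m <-> exists q, m = f q).

Definition has_summand_iso (R : comNzRingType) (M Q : lmodType R) : Prop :=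
  exists N1 N2 : M -> Prop, direct_sum_decomp N1 N2 /\ submod_iso Q N1.

Definition decomposable (R : comNzRingType) (M : lmodType R) : Prop :=
  exists N1 N2 : M -> Prop, [/\ direct_sum_decomp N1 N2,
    (exists u, N1 u /\ u <> 0) & (exists v, N2 v /\ v <> 0)].

Definition short_exact (R : comNzRingType) (A M B : lmodType R)
  (f : {linear A -> M}) (g : {linear M -> B}) : Prop :=
  [/\ injective f, (forall b, exists m, g m = b) &
      (forall m, g m = 0 <-> exists a, m = f a)].

(* Lift the generator of R/(y) to m0 in M: then y m0 = f(a) for some a in
   (R/(x))^n, whose coordinates lift to a_1, ..., a_n in R.  Fewer than n
   elements b generate the image of I = (a_1, ..., a_n) in R/(x,y); write
   a = C b modulo (x,y) and b = D a.  The n x n matrix 1 - C D cannot have all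
   its entries in the maximal ideal: det (C D) would then be a unit, whereas C D
   factors through R^m with m < n.  A row e of 1 - C D with a unit entry e_j
   gives sum_k e_k a_k in (x,y).  After correcting m0 by an element of the j-th
   copy of R/(x), the form sum_k e_k (.)_k vanishes on f^-1(y m0), and M is the
   direct sum of f(j-th copy of R/(x)) and f(kernel of that form) + R m0. *)

From HB Require Import structures.
From mathcomp Require Import all_boot all_order all_algebra.
From mathcomp Require Import boolp perm generic_quotient ring_quotient ring.

Set Implicit Arguments.
Unset Strict Implicit.
Unset Printing Implicit Defensive.
Import GRing.Theory.
Local Open Scope ring_scope.

Section QuotientProjection.
Variables (R : comNzRingType) (x : R).

Definition qproj (a : R) : quot_x x := (\pi_(quot_x x) a)%qT.

Lemma qproj_eq a b : qproj a = qproj b <-> exists c, a - b = c * x.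
Proof.
split => [/eqP | eq_ab]; first by rewrite -(@Quotient.idealrBE R (pideal x)) => /pidealP.
by apply/eqP; rewrite -(@Quotient.idealrBE R (pideal x)); apply/pidealP.
Qed.

Lemma qprojD a b : qproj (a + b) = qproj a + qproj b.
Proof. exact: pi_addx. Qed.

Lemma qproj0 : qproj 0 = 0.
Proof. by apply: (@addrI _ (qproj 0)); rewrite -qprojD !addr0. Qed.

Lemma qprojZ r a : r *: qproj a = qproj (r * a).
Proof. exact: qscale_pi. Qed.

Lemma qproj_repr (q : quot_x x) : q = qproj (repr q).
Proof. by rewrite /qproj reprK. Qed.

Lemma qproj_sum (I : finType) (F : I -> R) :
  qproj (\sum_i F i) = \sum_i qproj (F i).
Proof. exact: (big_morph qproj qprojD qproj0). Qed.

Lemma qproj_mulx c : qproj (c * x) = 0.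
Proof. by rewrite -qproj0; apply/qproj_eq; exists c; rewrite subr0. Qed.

End QuotientProjection.

Lemma qproj1_neq0 (R : comUnitRingType) (x : R) :
  in_max_ideal x -> qproj x 1 <> 0.
Proof.
move=> /negP xNunit; rewrite -(qproj0 x) => /qproj_eq[c].
rewrite subr0 => x_inv; apply: xNunit; apply/unitrP; exists c.
by rewrite [x * c]mulrC -x_inv.
Qed.

Section Coordinates.
Variables (R : comNzRingType) (x : R) (n : nat).

Definition inj_coord (j : 'I_n) (c : quot_x x) : quot_x_pow x n :=
  [ffun i => if i == j then c else 0].

Fact inj_coord_linear j : linear (inj_coord j).
Proof.
move=> a u v; apply/ffunP => i; rewrite !ffunE.
by case: (i == j); rewrite ?scaler0 ?addr0.
Qed.

HB.instance Definition _ j :=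
  GRing.isLinear.Build R (quot_x x) (quot_x_pow x n) _ (inj_coord j)
    (inj_coord_linear j).

Lemma inj_coord_inj j : injective (inj_coord j).
Proof. by move=> c d /ffunP /(_ j); rewrite !ffunE eqxx. Qed.

Definition lin_comb (e : 'I_n -> R) (z : quot_x_pow x n) : quot_x x :=
  \sum_k e k *: z k.

Fact lin_comb_linear e : linear (lin_comb e).
Proof.
move=> a u v; rewrite /lin_comb scaler_sumr -big_split /=.
by apply: eq_bigr => k _; rewrite !ffunE scalerDr !scalerA mulrC.
Qed.

HB.instance Definition _ e :=
  GRing.isLinear.Build R (quot_x_pow x n) (quot_x x) _ (lin_comb e)
    (lin_comb_linear e).

Lemma lin_comb_inj_coord e j c : lin_comb e (inj_coord j c) = e j *: c.
Proof.
rewrite /lin_comb (bigD1 j) //= big1 ?addr0 ?ffunE ?eqxx // => k /negbTE kNj.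
by rewrite ffunE kNj scaler0.
Qed.

Lemma lin_comb_repr e (a : quot_x_pow x n) :
  lin_comb e a = qproj x (\sum_k e k * repr (a k)).
Proof.
by rewrite qproj_sum; apply: eq_bigr => k _; rewrite -qprojZ -qproj_repr.
Qed.

End Coordinates.

Lemma det_mulmx_pad (R : comNzRingType) m k (k_gt0 : (0 < k)%N)
    (C : 'M[R]_(m + k, m)) (D : 'M[R]_(m, m + k)) :
  \det (C *m D) = 0.
Proof.
have -> : C *m D = row_mx C (0 : 'M_(m + k, k)) *m col_mx D (0 : 'M_(k, m + k)).
  by rewrite mul_row_col mul0mx addr0.
rewrite det_mulmx (expand_det_row (col_mx D 0) (rshift m (Ordinal k_gt0))).
by rewrite big1 ?mulr0 // => j _; rewrite col_mxEd mxE mul0r.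
Qed.

Lemma det_mulmx_lt (R : comNzRingType) m n (lt_mn : (m < n)%N)
    (C : 'M[R]_(n, m)) (D : 'M[R]_(m, n)) :
  \det (C *m D) = 0.
Proof.
have k_gt0 : (0 < n - m)%N by rewrite subn_gt0.
move: (n - m)%N k_gt0 (subnKC (ltnW lt_mn)) C D => k k_gt0 <- C D.
exact: det_mulmx_pad.
Qed.

Section LocalRing.
Variables (R : comUnitRingType) (HL : local_ring R).

Lemma max_ideal0 : in_max_ideal (0 : R).
Proof. by rewrite /in_max_ideal unitr0. Qed.

Lemma max_idealM (r a : R) : in_max_ideal a -> in_max_ideal (r * a).
Proof. by rewrite /in_max_ideal unitrM negb_and => ->; rewrite orbT. Qed.

Lemma max_idealD (a b : R) :
  in_max_ideal a -> in_max_ideal b -> in_max_ideal (a + b).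
Proof. exact: HL. Qed.

Lemma max_idealN (a : R) : in_max_ideal a -> in_max_ideal (- a).
Proof. by rewrite /in_max_ideal unitrN. Qed.

Lemma max_ideal_sum (I : finType) (P : pred I) (F : I -> R) :
  (forall i, P i -> in_max_ideal (F i)) -> in_max_ideal (\sum_(i | P i) F i).
Proof.
by move=> FP; apply: (big_ind (@in_max_ideal R)); [exact: max_ideal0 | exact: max_idealD |].
Qed.

Lemma unit_of_max_ideal_sub1 (a : R) :
  in_max_ideal (a - 1) -> a \is a GRing.unit.
Proof.
move=> a1M; apply/negPn/negP => aM.
by have := max_idealD aM (max_idealN a1M); rewrite opprB addrC subrK /in_max_ideal unitr1.
Qed.

Lemma max_ideal_prod_sub1 (I : finType) (F : I -> R) :
  (forall i, in_max_ideal (F i - 1)) -> in_max_ideal (\prod_i F i - 1).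
Proof.
move=> F1M; apply: (big_ind (fun a => in_max_ideal (a - 1))) => //.
  by rewrite subrr; exact: max_ideal0.
move=> a b a1M b1M.
have -> : a * b - 1 = a * (b - 1) + (a - 1) by rewrite mulrBr mulr1 addrA subrK.
exact: max_idealD (max_idealM _ b1M) a1M.
Qed.

(* Every term of the Leibniz expansion except the diagonal one contains an
   off-diagonal entry, which lies in the maximal ideal. *)
Lemma det_unit_of_max_ideal_sub1 n (A : 'M[R]_n) :
  (forall i j, in_max_ideal ((1%:M - A) i j)) -> \det A \is a GRing.unit.
Proof.
move=> AM; apply: unit_of_max_ideal_sub1.
rewrite /determinant (bigD1 (1%g : {perm 'I_n})) //= odd_perm1 expr0 mul1r.
rewrite addrAC; apply: max_idealD.
  apply: max_ideal_prod_sub1 => i; rewrite perm1.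
  by have := max_idealN (AM i i); rewrite !mxE eqxx opprB.
apply: max_ideal_sum => s s_neq1.
have [i si_neq_i] : exists i, s i != i.
  apply/existsP; apply: contraR s_neq1; rewrite negb_exists => /forallP s_id.
  by apply/eqP/permP => i; rewrite perm1; apply/eqP; have := s_id i; rewrite negbK.
rewrite (bigD1 i) //= mulrCA mulrC; apply: max_idealM.
by have := max_idealN (AM i (s i)); rewrite !mxE eq_sym (negbTE si_neq_i) sub0r opprK.
Qed.

Lemma one_sub_mulmx_unit_entry m n (lt_mn : (m < n)%N)
    (C : 'M[R]_(n, m)) (D : 'M[R]_(m, n)) :
  exists i k, (1%:M - C *m D) i k \is a GRing.unit.
Proof.
apply: contrapT => noUnit.
have : \det (C *m D) \is a GRing.unit.
  apply: det_unit_of_max_ideal_sub1 => i k; apply/negP => unit_ik.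
  by apply: noUnit; exists i, k.
by rewrite det_mulmx_lt // unitr0.
Qed.

End LocalRing.

Section IdealSpan.
Variables (R : comNzRingType) (n : nat) (alpha : 'I_n -> R).

Definition ideal_span (r : R) : Prop :=
  exists c : 'I_n -> R, r = \sum_k c k * alpha k.

Lemma ideal_span_is_ideal : is_ideal ideal_span.
Proof.
split.
- by exists (fun _ => 0); rewrite big1 // => k _; rewrite mul0r.
- move=> _ _ [c1 ->] [c2 ->]; exists (fun k => c1 k + c2 k).
  by rewrite -big_split; apply: eq_bigr => k _; rewrite mulrDl.
- move=> r _ [c ->]; exists (fun k => r * c k).
  by rewrite mulr_sumr; apply: eq_bigr => k _; rewrite mulrA.
Qed.

Lemma ideal_span_gen k : ideal_span (alpha k).
Proof.
exists (fun i => (i == k)%:R); rewrite (bigD1 k) //= eqxx mul1r big1 ?addr0 //.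
by move=> i /negbTE ->; rewrite mul0r.
Qed.

Lemma image_gen_by_span (x y : R) : image_gen_by x y ideal_span n.
Proof.
exists alpha; split=> [|_ [c ->]]; first exact: ideal_span_gen.
by exists c, 0, 0; rewrite !mul0r !addr0.
Qed.

End IdealSpan.

Lemma min_gens_image_exists (R : comNzRingType) (x y : R) (I : R -> Prop) k :
  image_gen_by x y I k -> exists m, min_gens_image x y I m.
Proof.
move=> gen_k; have gen_ex : exists k, `[< image_gen_by x y I k >].
  by exists k; apply/asboolP.
case: (ex_minnP gen_ex) => m /asboolP gen_m min_m; exists m.
by split=> // m' lt_m'm /asboolT /min_m; rewrite leqNgt lt_m'm.
Qed.

Lemma one_sub_mulmx_relation (R : comNzRingType) (x y : R) n m
    (alpha : 'I_n -> R) (b : 'I_m -> R) (C : 'M[R]_(n, m)) (D : 'M[R]_(m, n))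
    (s t : 'I_n -> R) :
  (forall k, alpha k = \sum_j C k j * b j + s k * x + t k * y) ->
  (forall j, b j = \sum_k D j k * alpha k) ->
  forall i, \sum_k (1%:M - C *m D) i k * alpha k = s i * x + t i * y.
Proof.
move=> alphaE bE i.
have -> : \sum_k (1%:M - C *m D) i k * alpha k = alpha i - \sum_j C i j * b j.
  under eq_bigr => k _ do rewrite !mxE mulrBl.
  rewrite sumrB (bigD1 i) //= eqxx mul1r big1 ?addr0 => [|k /negbTE kNi]; last first.
    by rewrite eq_sym kNi mul0r.
  congr (_ - _); under eq_bigr => k _ do rewrite mulr_suml.
  rewrite exchange_big /=; apply: eq_bigr => j _.
  by rewrite bE mulr_sumr; apply: eq_bigr => k _; rewrite mulrA.
by rewrite {1}alphaE; ring.
Qed.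

Lemma unit_relation_of_s_lt (R : comUnitRingType) (HL : local_ring R) (x y : R)
    n (Hn : s_lt x y n) (alpha : 'I_n -> R) :
  exists (e : 'I_n -> R) (j : 'I_n) (s t : R),
    e j \is a GRing.unit /\ \sum_k e k * alpha k = s * x + t * y.
Proof.
have [m min_m] := min_gens_image_exists (image_gen_by_span alpha x y).
have lt_mn := Hn _ (ideal_span_is_ideal alpha) m min_m.
have [[b [bI bgen]] _] := min_m.
have [D bE] : exists D : 'M[R]_(m, n), forall j, b j = \sum_k D j k * alpha k.
  have [Df DfE] := choice bI; exists (\matrix_(j, k) Df j k) => j.
  by rewrite DfE; apply: eq_bigr => k _; rewrite mxE.
have [C [s [t alphaE]]] : exists (C : 'M[R]_(n, m)) (s t : 'I_n -> R),
    forall k, alpha k = \sum_j C k j * b j + s k * x + t k * y.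
  have /choice[p pE] : forall k, exists p : ('I_m -> R) * R * R,
      alpha k = \sum_j p.1.1 j * b j + p.1.2 * x + p.2 * y.
    by move=> k; have [c [s [t ->]]] := bgen _ (ideal_span_gen alpha k); exists (c, s, t).
  exists (\matrix_(k, j) (p k).1.1 j), (fun k => (p k).1.2), (fun k => (p k).2).
  by move=> k; rewrite pE; congr (_ + _ + _); apply: eq_bigr => j _; rewrite mxE.
have [i [j unit_ij]] := one_sub_mulmx_unit_entry HL lt_mn C D.
exists (fun k => (1%:M - C *m D) i k), j, (s i), (t i); split => //.
exact: one_sub_mulmx_relation alphaE bE i.
Qed.

Section Splitting.
Variables (R : comUnitRingType) (x y : R) (n : nat) (M : lmodType R).
Variables (f : {linear quot_x_pow x n -> M}) (g : {linear M -> quot_x y}).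
Hypothesis fg_exact : short_exact f g.

Lemma gf0 a : g (f a) = 0.
Proof. by have [_ _ g_ker] := fg_exact; apply/g_ker; exists a. Qed.

Lemma lift_generator : exists m0 a, g m0 = qproj y 1 /\ y *: m0 = f a.
Proof.
have [_ g_surj g_ker] := fg_exact; have [m0 gm0] := g_surj (qproj y 1).
have [a ya] : exists a, y *: m0 = f a.
  apply/g_ker; rewrite linearZ /= gm0 qprojZ mulr1.
  by have := qproj_mulx y 1; rewrite mul1r.
by exists m0, a.
Qed.

Variables (e : 'I_n -> R) (j : 'I_n).
Hypothesis unit_ej : e j \is a GRing.unit.

Lemma adjust_lift m0 a s t :
  g m0 = qproj y 1 -> y *: m0 = f a ->
  \sum_k e k * repr (a k) = s * x + t * y ->
  exists m1 a1, [/\ g m1 = qproj y 1, y *: m1 = f a1 & lin_comb e a1 = 0].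
Proof.
move=> gm0 ya rel; pose w := inj_coord j (qproj x ((e j)^-1 * t)).
exists (m0 - f w), (a - y *: w); split.
- by rewrite linearB /= gm0 gf0 subr0.
- by rewrite scalerBr ya linearB; congr (_ - _); rewrite linearZ.
- rewrite linearB linearZ /= lin_comb_inj_coord (qprojZ x (e j)) (qprojZ x y).
  have -> : lin_comb e a = qproj x (t * y).
    by rewrite lin_comb_repr rel; apply/qproj_eq; exists s; rewrite addrK.
  by rewrite [e j * _]mulrA mulrV // mul1r mulrC subrr.
Qed.

Variables (m1 : M) (a1 : quot_x_pow x n).
Hypotheses (gm1 : g m1 = qproj y 1) (ya1 : y *: m1 = f a1).
Hypothesis la1 : lin_comb e a1 = 0.

Definition coord_summand (v : M) : Prop := exists c, v = f (inj_coord j c).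

Definition compl_summand (v : M) : Prop :=
  exists z r, lin_comb e z = 0 /\ v = f z + r *: m1.

Lemma coord_summand_submod : is_submod coord_summand.
Proof.
split.
- by exists 0; rewrite !linear0.
- by move=> _ _ [c1 ->] [c2 ->]; exists (c1 + c2); rewrite !linearD.
- by move=> r _ [c ->]; exists (r *: c); rewrite !linearZ.
Qed.

Lemma compl_summand_submod : is_submod compl_summand.
Proof.
split.
- by exists 0, 0; rewrite !linear0 scale0r addr0.
- move=> _ _ [z1 [r1 [ez1 ->]]] [z2 [r2 [ez2 ->]]]; exists (z1 + z2), (r1 + r2).
  by rewrite !linearD /= ez1 ez2 addr0 scalerDl addrACA.
- move=> r _ [z [r1 [ez ->]]]; exists (r *: z), (r * r1).
  by rewrite !linearZ /= ez scaler0 scalerDr scalerA.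
Qed.

(* Applying [g] shows [r] is a multiple of [y], so the whole element lies in
   the image of [f], where [lin_comb e] separates the two parts. *)
Lemma summands_meet0 v : coord_summand v -> compl_summand v -> v = 0.
Proof.
move=> [c ->] [z [r [ez vE]]]; have [f_inj _ _] := fg_exact.
have /esym : g (f (inj_coord j c)) = g (f z + r *: m1) by rewrite vE.
rewrite gf0 linearD gf0 add0r linearZ /= gm1 qprojZ mulr1 -(qproj0 y).
move=> /qproj_eq[r' r_mul]; rewrite subr0 in r_mul.
move: vE; rewrite r_mul -scalerA ya1 -linearZ -linearD => /f_inj /(congr1 (lin_comb e)).
rewrite lin_comb_inj_coord linearD linearZ /= ez la1 scaler0 addr0 => ec0.
by rewrite -(scale1r c) -(mulVr unit_ej) -scalerA ec0 scaler0 !linear0.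
Qed.

Lemma summands_span v :
  exists u w, [/\ coord_summand u, compl_summand w & v = u + w].
Proof.
have [_ _ g_ker] := fg_exact; set r := repr (g v).
have /g_ker[z zE] : g (v - r *: m1) = 0.
  by rewrite linearB linearZ /= gm1 qprojZ mulr1 -qproj_repr subrr.
pose c := (e j)^-1 *: lin_comb e z.
exists (f (inj_coord j c)), (f (z - inj_coord j c) + r *: m1); split.
- by exists c.
- exists (z - inj_coord j c), r; split => //.
  by rewrite linearB /= lin_comb_inj_coord /c scalerA mulrV // scale1r subrr.
- by rewrite linearB -zE addrAC addrNK subrKC.
Qed.

Lemma coord_compl_direct_sum : direct_sum_decomp coord_summand compl_summand.
Proof.
split; [exact: coord_summand_submod | exact: compl_summand_submod |
        exact: summands_meet0 | exact: summands_span].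
Qed.

Lemma coord_summand_iso : submod_iso (quot_x x) coord_summand.
Proof.
have [f_inj _ _] := fg_exact; exists (f \o inj_coord j)%FUN; split.
  by move=> c d /= /f_inj /inj_coord_inj.
by move=> v; split=> -[q ->]; exists q.
Qed.

Lemma coord_summand_neq0 :
  in_max_ideal x -> exists u, coord_summand u /\ u <> 0.
Proof.
move=> xM; have [f_inj _ _] := fg_exact.
exists (f (inj_coord j (qproj x 1))); split; first by exists (qproj x 1).
move=> f0; apply: (qproj1_neq0 xM); apply: (@inj_coord_inj _ _ _ j); apply: f_inj.
by rewrite f0 !linear0.
Qed.

Lemma compl_summand_neq0 :
  in_max_ideal y -> exists v, compl_summand v /\ v <> 0.
Proof.
move=> yM; exists m1; split; first by exists 0, 1; rewrite !linear0 add0r scale1r.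
by move=> m10; apply: (qproj1_neq0 yM); rewrite -gm1 m10 linear0.
Qed.

End Splitting.

Theorem proposition3p5 (R : comUnitRingType)
  (HN : noetherian_ring R) (HL : local_ring R)
  (x y : R) (Hx : in_max_ideal x) (Hy : in_max_ideal y)
  (n : nat) (Hn : s_lt x y n)
  (M : lmodType R)
  (f : {linear quot_x_pow x n -> M}) (g : {linear M -> quot_x y})
  (Hex : short_exact f g) :
  has_summand_iso M (quot_x x) /\ decomposable M.
Proof.
have [m0 [a [gm0 ya]]] := lift_generator Hex.
have [e [j [s [t [unit_ej rel]]]]] :=
  unit_relation_of_s_lt HL Hn (fun k => repr (a k)).
have [m1 [a1 [gm1 ya1 la1]]] := adjust_lift Hex unit_ej gm0 ya rel.
have split_M := coord_compl_direct_sum Hex unit_ej gm1 ya1 la1.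
split.
  exists (coord_summand f j), (compl_summand f e m1).
  by split; [exact: split_M | exact: coord_summand_iso Hex j].
exists (coord_summand f j), (compl_summand f e m1); split => //.
- exact: coord_summand_neq0 Hex j Hx.
- exact: compl_summand_neq0 gm1 Hy.
Qed.
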